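(* Let $A:\mathbb{R}^N\to\mathbb{R}^{N\times N}$ be such that $A(y)$ is symmetric positive semidefinite for all $y$ and $\|A(u)-A(v)\|\le L\|u-v\|$ for all $u,v$, with $L>0$. Let $t_n\in\mathbb{R}$, $\Delta t>0$, $y^n,g^{n+1}\in\mathbb{R}^N$, and let $\tilde y:[t_n,t_n+\Delta t]\to\mathbb{R}^N$ solve $$\tilde y'(t)=-A(\tilde y(t))\tilde y(t)+g^{n+1},\qquad \tilde y(t_n)=y^n.$$ Define $\tilde y^{(0)}(t)\equiv y^n$ and, for $m\ge0$, $\tilde y^{(m+1)}$ as the solution on $[t_n,t_n+\Delta t]$ of $(\tilde y^{(m+1)})'(t)=-A(\tilde y^{(m)}(t))\tilde y^{(m+1)}(t)+g^{n+1}$, $\tilde y^{(m+1)}(t_n)=y^n$. Let $\omega\ge 0$ be such that $(A(\tilde y^{(m)}(t))x,x)\ge\omega(x,x)$ for all $x\in\mathbb{R}^N$, all $t\in[t_n,t_n+\Delta t]$ and all $m\ge0$. If $$\Delta t\,\varphi(-\Delta t\,\omega)\,L\max_{s\in[t_n,t_n+\Delta t]}\|\tilde y(s)\|<1,$$ then $$\max_{s\in[t_n,t_n+\Delta t]}\|\tilde y(s)-\tilde y^{(m+1)}(s)\|\le \Delta t\,\varphi(-\Delta t\omega)\,L\max_{s}\|\tilde y(s)\|\;\max_{s\in[t_n,t_n+\Delta t]}\|\tilde y(s)-\tilde y^{(m)}(s)\|$$ for all $m\ge0$, and consequently $\max_{s\in[t_n,t_n+\Delta t]}\|\tilde y(s)-\tilde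 y^{(m)}(s)\|\to0$ as $m\to\infty$.
   Context: $(x,y)=y^Tx$ is the standard inner product; $\|\cdot\|$ is the Euclidean vector norm and induced matrix norm. $\varphi(z)=(e^z-1)/z$ with $\varphi(0)=1$; for $t\ge0$, $t\varphi(-t\omega)=t$ if $\omega=0$ and $=(1-e^{-t\omega})/\omega$ if $\omega>0$. *)

From HB Require Import structures.
From mathcomp Require Import all_boot all_order all_algebra.
From mathcomp Require Import all_classical all_reals all_analysis.
Set Implicit Arguments. Unset Strict Implicit. Unset Printing Implicit Defensive.
Import Order.TTheory GRing.Theory Num.Theory.
Import numFieldNormedType.Exports.
Local Open Scope classical_set_scope.
Local Open Scope ring_scope.

Definition dotv (R : realType) (N : nat) (x y : 'cV[R]_N) : R := (y^T *m x) 0 0.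

Definition vnorm (R : realType) (N : nat) (x : 'cV[R]_N) : R := Num.sqrt (dotv x x).

Definition opnorm (R : realType) (N : nat) (M : 'M[R]_N) : R :=
  sup [set vnorm (M *m x) | x in [set x : 'cV[R]_N | vnorm x <= 1]].

Definition phi (R : realType) (z : R) : R :=
  if z == 0 then 1 else (expR z - 1) / z.

(* max over s in [a,b] of ||f s|| (a sup; a max for continuous f) *)
Definition maxI (R : realType) (N : nat) (a b : R) (f : R -> 'cV[R]_N) : R :=
  sup [set vnorm (f s) | s in `[a, b]].

Definition solves (R : realType) (N : nat) (a b : R)
    (F : R -> 'cV[R]_N -> 'cV[R]_N) (y0 : 'cV[R]_N) (y : R -> 'cV[R]_N) : Prop :=
  y a = y0 /\
  (forall i : 'I_N, {within `[a, b], continuous (fun s => y s i 0)}) /\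
  (forall t, a < t < b -> forall i : 'I_N,
      is_derive t 1 (fun s => y s i 0) ((F t (y t)) i 0)).

From HB Require Import structures.
From mathcomp Require Import all_boot all_order all_algebra.
From mathcomp Require Import all_classical all_reals all_analysis.
From mathcomp.algebra_tactics Require Import ring lra.
Import Order.TTheory GRing.Theory Num.Theory.
Import numFieldNormedType.Exports.
Local Open Scope classical_set_scope.
Local Open Scope ring_scope.

(* The error e = yt - Y (m+1) vanishes at tn and satisfies
   e' = - A (Y m) e - (A yt - A (Y m)) yt.  Pairing with e, coercivity,
   Cauchy-Schwarz and the Lipschitz bound give
   (e', e) <= - omega |e|^2 + K |e|  with  K = L max|yt| max|yt - Y m|.
   A linear Groenwall argument, applied to the smoothed norm sqrt(|e|^2 + eps^2)
   since the norm is not differentiable at 0, bounds |e t| by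
   K (t - tn) phi(- (t - tn) omega); this is the contraction estimate, and the
   iteration errors then decay geometrically. *)

Section EuclideanNorm.
Context {R : realType} {N : nat}.
Implicit Types x y z : 'cV[R]_N.

Lemma dotvE x y : dotv x y = \sum_i x i 0 * y i 0.
Proof. by rewrite /dotv !mxE; apply: eq_bigr => i _; rewrite mxE mulrC. Qed.

Lemma dotv0l y : dotv 0 y = 0.
Proof. by rewrite dotvE big1 // => i _; rewrite mxE mul0r. Qed.

Lemma dotvNl x y : dotv (- x) y = - dotv x y.
Proof. by rewrite !dotvE -sumrN; apply: eq_bigr => i _; rewrite mxE mulNr. Qed.

Lemma dotvDl x z y : dotv (x + z) y = dotv x y + dotv z y.
Proof. by rewrite !dotvE -big_split; apply: eq_bigr => i _; rewrite mxE mulrDl. Qed.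

Lemma dotvZ c x : dotv (c *: x) (c *: x) = c ^+ 2 * dotv x x.
Proof. by rewrite !dotvE mulr_sumr; apply: eq_bigr => i _; rewrite !mxE; ring. Qed.

Lemma dotv_ge0 x : 0 <= dotv x x.
Proof. by rewrite dotvE sumr_ge0 // => i _; rewrite -expr2 sqr_ge0. Qed.

Lemma vnorm_ge0 x : 0 <= vnorm x.
Proof. exact: sqrtr_ge0. Qed.

Lemma sqr_vnorm x : vnorm x ^+ 2 = dotv x x.
Proof. by rewrite /vnorm sqr_sqrtr // dotv_ge0. Qed.

Lemma vnormZ c x : vnorm (c *: x) = `|c| * vnorm x.
Proof. by rewrite /vnorm dotvZ sqrtrM ?sqr_ge0 // sqrtr_sqr. Qed.

Lemma vnormN x : vnorm (- x) = vnorm x.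
Proof. by rewrite -scaleN1r vnormZ normrN normr1 mul1r. Qed.

Lemma vnorm_coord_le x j : `|x j 0| <= vnorm x.
Proof.
rewrite -(sqrtr_sqr (x j 0)) ler_sqrt ?dotv_ge0 // dotvE (bigD1 j) //= expr2.
by rewrite lerDl sumr_ge0 // => i _; rewrite -expr2 sqr_ge0.
Qed.

Lemma vnorm_eq0 x : vnorm x = 0 -> x = 0.
Proof.
move=> x0; apply/matrixP => i j; rewrite (ord1 j) mxE.
by apply/normr0_eq0/le_anti; rewrite normr_ge0 -x0 vnorm_coord_le.
Qed.

Lemma vnorm_le_sum x : vnorm x <= \sum_i `|x i 0|.
Proof.
have S0 : 0 <= \sum_i `|x i 0| by rewrite sumr_ge0.
rewrite -(ger0_norm S0) -(sqrtr_sqr (\sum_i _)) ler_sqrt ?sqr_ge0 //.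
rewrite dotvE expr2 mulr_sumr; apply: ler_sum => i _.
rewrite (le_trans (ler_norm _)) // normrM ler_wpM2r //.
by rewrite (bigD1 i) //= lerDl sumr_ge0.
Qed.

Lemma cauchy_schwarz x y : dotv x y <= vnorm x * vnorm y.
Proof.
set a := vnorm x; set b := vnorm y; set S := dotv x y.
have a0 : 0 <= a by apply: vnorm_ge0.
have b0 : 0 <= b by apply: vnorm_ge0.
have [ab0|] := ltP 0 (a * b).
  have : 0 <= \sum_i (b * x i 0 - a * y i 0) ^+ 2.
    by rewrite sumr_ge0 // => i _; rewrite sqr_ge0.
  have -> : \sum_i (b * x i 0 - a * y i 0) ^+ 2 =
      b ^+ 2 * dotv x x - 2 * a * b * S + a ^+ 2 * dotv y y.
    rewrite /S !dotvE !mulr_sumr -sumrB -big_split /=.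
    by apply: eq_bigr => i _; ring.
  by rewrite -!sqr_vnorm -/a -/b => key; nra.
move=> ab_le0; have : a * b == 0 by rewrite eq_le ab_le0 mulr_ge0.
rewrite mulf_eq0 => /orP[/eqP/vnorm_eq0 x0 | /eqP/vnorm_eq0 y0].
- by rewrite /S x0 dotv0l mulr_ge0.
- by rewrite /S y0 dotvE big1 ?mulr_ge0 // => i _; rewrite mxE mulr0.
Qed.

Lemma opnorm_bounded (M : 'M[R]_N) :
  has_ubound [set vnorm (M *m x) | x in [set x : 'cV[R]_N | vnorm x <= 1]].
Proof.
exists (\sum_i \sum_j `|M i j|) => _ [x /= x1 <-].
apply: le_trans (vnorm_le_sum _) _; apply: ler_sum => i _.
rewrite mxE; apply: le_trans (ler_norm_sum _ _ _) _; apply: ler_sum => j _.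
by rewrite normrM ler_piMr // (le_trans (vnorm_coord_le _ _)).
Qed.

Lemma vnorm_mulmx_le (M : 'M[R]_N) x : vnorm (M *m x) <= opnorm M * vnorm x.
Proof.
have [/vnorm_eq0 ->|xn0] := eqVneq (vnorm x) 0.
  by rewrite mulmx0 -(scale0r 0) vnormZ normr0 !mul0r mulr0.
have x_gt0 : 0 < vnorm x by rewrite lt_neqAle eq_sym xn0 vnorm_ge0.
set u := (vnorm x)^-1 *: x.
have u1 : vnorm u = 1 by rewrite vnormZ ger0_norm ?invr_ge0 ?vnorm_ge0 // mulVf.
have -> : M *m x = vnorm x *: (M *m u) by rewrite -scalemxAr scalerA mulfV // scale1r.
rewrite vnormZ ger0_norm ?vnorm_ge0 // mulrC ler_wpM2r ?vnorm_ge0 //.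
apply: ub_le_sup; first exact: opnorm_bounded.
by exists u => //=; rewrite u1.
Qed.

End EuclideanNorm.

Section Curves.
Context {R : realType} {N : nat}.

Lemma within_continuousM (A : set R) (f g : R -> R) :
  {within A, continuous f} -> {within A, continuous g} ->
  {within A, continuous (fun s => f s * g s)}.
Proof. by move=> cf cg x; apply: cvgM; [exact: cf|exact: cg]. Qed.

Lemma within_continuous_dotv [A : set R] [f : R -> 'cV[R]_N] :
  (forall i, {within A, continuous (fun s => f s i 0)}) ->
  {within A, continuous (fun s => dotv (f s) (f s))}.
Proof.
move=> cf.
have -> : (fun s => dotv (f s) (f s)) = \sum_i (fun s => f s i 0 * f s i 0).
  by rewrite fct_sumE; apply/funext => s; rewrite dotvE.
elim/big_ind: _ => [|g1 g2|i _]; last exact: within_continuousM.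
- exact: continuous_subspaceT (@cst_continuous _ _ 0).
- exact: within_continuousD.
Qed.

Lemma vnorm_bounded_within (a b : R) (f : R -> 'cV[R]_N) : a <= b ->
  (forall i, {within `[a, b], continuous (fun s => f s i 0)}) ->
  exists B, forall s, a <= s <= b -> vnorm (f s) <= B.
Proof.
move=> ab cf; have [c _ fc_max] := EVT_max ab (within_continuous_dotv cf).
by exists (vnorm (f c)) => s sab; rewrite ler_sqrt ?dotv_ge0 // fc_max ?in_itv.
Qed.

Lemma is_derive_dotv [e d : R -> 'cV[R]_N] [t : R] :
  (forall i, is_derive t 1 (fun s => e s i 0) (d t i 0)) ->
  is_derive t 1 (fun s => dotv (e s) (e s)) (2 * dotv (d t) (e t)).
Proof.
move=> de.
have -> : (fun s => dotv (e s) (e s)) = \sum_i (fun s => e s i 0 * e s i 0).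
  by rewrite fct_sumE; apply/funext => s; rewrite dotvE.
apply: is_derive_eq (is_derive_sum (fun i => is_deriveM (de i) (de i))) _.
rewrite dotvE mulr_sumr; apply: eq_bigr => i _ /=; rewrite /GRing.scale /=; ring.
Qed.

Lemma maxI_ub (a b : R) (f : R -> 'cV[R]_N) s :
  (exists B, forall s, a <= s <= b -> vnorm (f s) <= B) -> a <= s <= b ->
  vnorm (f s) <= maxI a b f.
Proof.
move=> [B fB] sab; apply: ub_le_sup.
  by exists B => _ [r /= rab <-]; apply: fB; rewrite in_itv /= in rab.
by exists s => //=; rewrite in_itv.
Qed.

Lemma maxI_le (a b : R) (f : R -> 'cV[R]_N) C : a <= b ->
  (forall s, a <= s <= b -> vnorm (f s) <= C) -> maxI a b f <= C.
Proof.
move=> ab fC; apply: ge_sup.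
  by exists (vnorm (f a)), a => //=; rewrite in_itv /= lexx ab.
by move=> _ [r /= rab <-]; apply: fC; rewrite in_itv /= in rab.
Qed.

Lemma maxI_ge0 (a b : R) (f : R -> 'cV[R]_N) : a <= b ->
  (exists B, forall s, a <= s <= b -> vnorm (f s) <= B) -> 0 <= maxI a b f.
Proof.
by move=> ab fB; rewrite (le_trans (vnorm_ge0 (f a))) // maxI_ub // lexx ab.
Qed.

End Curves.

Section PhiFunction.
Context {R : realType}.
Implicit Types a om s t x z : R.

Lemma phi_ge0 z : z <= 0 -> 0 <= phi z.
Proof.
rewrite /phi; case: eqP => // z0 z_le0.
have z_lt0 : z < 0 by rewrite lt_neqAle z_le0 andbT; apply/eqP.
by rewrite mulr_le0 ?invr_le0 // subr_le0 -expR0 ler_expR.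
Qed.

Lemma mul_phi om t : om != 0 -> t * phi (t * om) = (expR (t * om) - 1) / om.
Proof.
move=> om0; rewrite /phi mulf_eq0 (negbTE om0) orbF.
have [->|t0] := eqVneq t 0; first by rewrite !mul0r expR0 subrr mul0r.
by field; rewrite t0 om0.
Qed.

Lemma mul_phiN om t : om != 0 -> t * phi (- (t * om)) = (1 - expR (- (t * om))) / om.
Proof.
move=> om0; rewrite /phi oppr_eq0 mulf_eq0 (negbTE om0) orbF.
have [->|t0] := eqVneq t 0; first by rewrite !mul0r oppr0 expR0 subrr mul0r.
by field; rewrite t0 om0.
Qed.

Lemma expRN_mul_phi z : expR (- z) * phi z = phi (- z).
Proof.
rewrite /phi oppr_eq0; have [->|z0] := eqVneq z 0; first by rewrite oppr0 expR0 mulr1.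
by rewrite expRN; field; rewrite z0 gt_eqF ?expR_gt0.
Qed.

Lemma mul_phiN_le om s t : 0 <= om -> 0 <= s <= t ->
  s * phi (- (s * om)) <= t * phi (- (t * om)).
Proof.
move=> om_ge0 /andP[s_ge0 st]; have [->|om0] := eqVneq om 0.
  by rewrite !mulr0 oppr0 /phi eqxx !mulr1.
have om_gt0 : 0 < om by rewrite lt_neqAle eq_sym om0.
rewrite !mul_phiN // ler_pM2r ?invr_gt0 // lerD2l lerN2 ler_expR lerN2.
by rewrite ler_wpM2r.
Qed.

Lemma is_derive_expR_affine a om x :
  is_derive x 1 (fun s => expR ((s - a) * om)) (expR ((x - a) * om) * om).
Proof.
have dlin : is_derive x 1 (fun s => (s - a) * om) om.
  by apply: is_derive_eq; rewrite subr0 scaler0 add0r /GRing.scale /= mulr1.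
exact: (is_derive1_comp (f := expR) (is_derive_expR _) dlin).
Qed.

Lemma is_derive_mul_phi a om x :
  is_derive x 1 (fun s => (s - a) * phi ((s - a) * om)) (expR ((x - a) * om)).
Proof.
have [->|om0] := eqVneq om 0.
  have -> : (fun s => (s - a) * phi ((s - a) * 0)) = (fun s => s - a).
    by apply/funext => s; rewrite mulr0 /phi eqxx mulr1.
  by apply: is_derive_eq; rewrite mulr0 expR0 subr0.
have -> : (fun s => (s - a) * phi ((s - a) * om)) =
    (fun s => (expR ((s - a) * om) - 1) * om^-1).
  by apply/funext => s; rewrite mul_phi.
apply: is_derive_eq (is_deriveM (is_deriveB (is_derive_expR_affine a om x)
  (@is_derive_cst _ R^o R^o 1 x 1)) (@is_derive_cst _ R^o R^o om^-1 x 1)) _.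
by rewrite /GRing.scale /= subr0 mulr0 add0r mulrC mulfK.
Qed.

End PhiFunction.

Section Gronwall.
Context {R : realType}.

Lemma continuous_of_is_derive (f df : R -> R) :
  (forall x : R, is_derive x 1 f (df x)) -> continuous f.
Proof.
move=> f_df x; apply: differentiable_continuous; apply/derivable1_diffP.
exact: ex_derive.
Qed.

Lemma gronwall_linear [a b om c : R] [v dv : R -> R] :
  {within `[a, b], continuous v} ->
  (forall x, a < x < b -> is_derive x 1 v (dv x)) ->
  (forall x, a < x < b -> dv x <= - om * v x + c) ->
  forall t, a <= t <= b ->
  v t <= expR (- ((t - a) * om)) * v a + c * ((t - a) * phi (- ((t - a) * om))).
Proof.
move=> cv dv_v dv_le t /andP[a_le_t t_le_b].
pose E s := expR ((s - a) * om).
(* h s = \int_a^s expR ((r - a) * om) dr, also when om = 0. *)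
pose h s := (s - a) * phi ((s - a) * om).
pose G s := E s * v s - c * h s.
have dG x : a < x < b -> is_derive x 1 G (E x * (dv x + om * v x - c)).
  move=> xab; apply: is_derive_eq (is_deriveB
    (is_deriveM (is_derive_expR_affine a om x) (dv_v x xab))
    (is_deriveM (@is_derive_cst _ R^o R^o c x 1) (is_derive_mul_phi a om x))) _.
  by rewrite /GRing.scale /E /=; ring.
have cG : {within `[a, b], continuous G}.
  have cE : {within `[a, b], continuous E}.
    apply: continuous_subspaceT; exact: continuous_of_is_derive (is_derive_expR_affine a om).
  have ch : {within `[a, b], continuous h}.
    apply: continuous_subspaceT; exact: continuous_of_is_derive (is_derive_mul_phi a om).
  apply: within_continuousB; first exact: within_continuousM.
  apply: within_continuousM ch.
  exact: continuous_subspaceT (@cst_continuous _ _ c).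
have : G t <= G a.
  apply: (ler0_derive1_le_cc (a := a) (b := b)) => //;
    rewrite ?in_itv /= ?lexx ?a_le_t ?t_le_b ?(le_trans a_le_t t_le_b) //.
  - by move=> x; rewrite in_itv /= => /dG dGx; exact: ex_derive.
  - move=> x; rewrite in_itv /= => xab; have dGx := dG x xab; rewrite derive1E derive_val.
    by rewrite pmulr_rle0 ?expR_gt0 //; have := dv_le x xab; lra.
have Et_gt0 : 0 < E t by apply: expR_gt0.
have -> : expR (- ((t - a) * om)) * v a + c * ((t - a) * phi (- ((t - a) * om)))
    = (v a + c * h t) / E t.
  by rewrite -expRN_mul_phi /h /E expRN; field; rewrite gt_eqF // expR_gt0.
have -> : G a = v a by rewrite /G /E /h subrr !mul0r expR0 mul1r mulr0 subr0.
by rewrite ler_pdivlMr // /G mulrC => ?; lra.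
Qed.

End Gronwall.

Section DissipativeBound.
Context {R : realType} {N : nat}.

Lemma regularized_norm_slope (om K eps u D : R) :
  0 <= om -> 0 <= K -> 0 < eps -> 0 <= u ->
  D <= - om * u + K * Num.sqrt u ->
  D / Num.sqrt (u + eps ^+ 2) <= - om * Num.sqrt (u + eps ^+ 2) + (K + om * eps).
Proof.
move=> om_ge0 K_ge0 eps_gt0 u_ge0 D_le.
have ue_ge0 : 0 <= u + eps ^+ 2 by rewrite addr_ge0 // sqr_ge0.
set W := Num.sqrt (u + eps ^+ 2).
have W2 : W ^+ 2 = u + eps ^+ 2 by rewrite sqr_sqrtr.
have sqrt_le_W : Num.sqrt u <= W by rewrite ler_sqrt // lerDl sqr_ge0.
have eps_le_W : eps <= W.
  by rewrite -(gtr0_norm eps_gt0) -sqrtr_sqr ler_sqrt // lerDr.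
have W_gt0 : 0 < W := lt_le_trans eps_gt0 eps_le_W.
have : 0 <= K * (W - Num.sqrt u) by rewrite mulr_ge0 // subr_ge0.
have : 0 <= om * eps * (W - eps) by rewrite !mulr_ge0 ?subr_ge0 // ltW.
by rewrite ler_pdivrMr // => ? ?; nra.
Qed.

Lemma vnorm_le_of_dissipative [a b om K : R] [e d : R -> 'cV[R]_N] :
  0 <= om -> 0 <= K -> e a = 0 ->
  (forall i, {within `[a, b], continuous (fun s => e s i 0)}) ->
  (forall t, a < t < b -> forall i, is_derive t 1 (fun s => e s i 0) (d t i 0)) ->
  (forall t, a < t < b ->
     dotv (d t) (e t) <= - om * dotv (e t) (e t) + K * vnorm (e t)) ->
  forall t, a <= t <= b -> vnorm (e t) <= K * ((t - a) * phi (- ((t - a) * om))).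
Proof.
move=> om_ge0 K_ge0 ea ce de dissip t tab.
set T := (t - a) * phi (- ((t - a) * om)).
have ta_ge0 : 0 <= t - a by rewrite subr_ge0; case/andP: tab.
have T_ge0 : 0 <= T by rewrite mulr_ge0 // phi_ge0 // oppr_le0 mulr_ge0.
apply/ler_addgt0Pr => eps eps_gt0.
have C_gt0 : 0 < 1 + om * T by have := mulr_ge0 om_ge0 T_ge0; lra.
(* The smoothing parameter is scaled so that its total cost at time t is eps. *)
set del := eps / (1 + om * T).
have del_gt0 : 0 < del by rewrite divr_gt0.
pose u s := dotv (e s) (e s).
pose w s := Num.sqrt (u s + del ^+ 2).
have cw : {within `[a, b], continuous w}.
  apply: (within_continuous_comp _ (fun s => u s + del ^+ 2) Num.sqrt).
    by move=> y _; apply: sqrt_continuous.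
  apply: within_continuousD; first exact: within_continuous_dotv.
  exact: continuous_subspaceT (@cst_continuous _ _ (del ^+ 2)).
have dw x : a < x < b -> is_derive x 1 w (dotv (d x) (e x) / w x).
  move=> xab; have du : is_derive x 1 (fun s => u s + del ^+ 2) (2 * dotv (d x) (e x)).
    have := is_deriveD (is_derive_dotv (de x xab)) (is_derive_cst (del ^+ 2) x 1).
    by rewrite addr0.
  have ux_gt0 : 0 < u x + del ^+ 2 by rewrite ltr_wpDl ?dotv_ge0 // exprn_gt0.
  have dsqrt := @is_derive1_comp R Num.sqrt _ x _ _ (is_derive1_sqrt ux_gt0) du.
  apply: is_derive_eq dsqrt _.
  by rewrite /w; field; rewrite gt_eqF ?sqrtr_gt0.
have slope x : a < x < b -> dotv (d x) (e x) / w x <= - om * w x + (K + om * del).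
  by move=> xab; apply: regularized_norm_slope; rewrite ?dotv_ge0 ?dissip.
have := gronwall_linear cw dw slope _ tab.
have -> : w a = del by rewrite /w /u ea dotv0l add0r sqrtr_sqr gtr0_norm.
have decay : expR (- ((t - a) * om)) <= 1 by rewrite expR_le1 oppr_le0 mulr_ge0.
have e_le_w : vnorm (e t) <= w t.
  by rewrite ler_sqrt ?lerDl ?sqr_ge0 // addr_ge0 ?dotv_ge0 ?sqr_ge0.
have del_C : del * (1 + om * T) = eps by rewrite divfK // gt_eqF.
have := ler_wpM2r (ltW del_gt0) decay; rewrite mul1r -/T; nra.
Qed.

End DissipativeBound.

Lemma dotv_dissipative_perturbation {R : realType} {N : nat} (Ay : 'M[R]_N)
    (y : 'cV[R]_N) [Am : 'M[R]_N] [e : 'cV[R]_N] [om : R] :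
  om * dotv e e <= dotv (Am *m e) e ->
  dotv (- (Am *m e) - (Ay - Am) *m y) e
    <= - om * dotv e e + opnorm (Ay - Am) * vnorm y * vnorm e.
Proof.
move=> coercive; rewrite dotvDl !dotvNl mulNr lerD ?lerN2 //.
rewrite -dotvNl (le_trans (cauchy_schwarz _ _)) // vnormN.
by rewrite ler_wpM2r ?vnorm_ge0 ?vnorm_mulmx_le.
Qed.

Lemma contraction_cvg0 {R : realType} (D : nat -> R) (q : R) :
  0 <= q < 1 -> (forall m, 0 <= D m) -> (forall m, D m.+1 <= q * D m) ->
  D @ \oo --> 0.
Proof.
move=> /andP[q_ge0 q_lt1] D_ge0 D_contr.
have D_le m : D m <= geometric (D 0%N) q m.
  elim: m => [|m IH]; first by rewrite /geometric /= expr0 mulr1.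
  by rewrite (le_trans (D_contr m)) // /geometric /= exprS mulrCA ler_wpM2l.
apply: (squeeze_cvgr _ (cvg_cst 0) (cvg_geometric (D 0%N) _)).
  by apply: nearW => m; apply/andP; split; [exact: D_ge0 | exact: D_le].
by rewrite ger0_norm.
Qed.

Section PicardIteration.
Context {R : realType} {N : nat}.
Context {A : 'cV[R]_N -> 'M[R]_N} {L tn dt omega : R} {yn g : 'cV[R]_N}
  {yt : R -> 'cV[R]_N} {Y : nat -> R -> 'cV[R]_N}.
Hypotheses (A_lip : forall u v, opnorm (A u - A v) <= L * vnorm (u - v))
  (L_gt0 : 0 < L) (dt_gt0 : 0 < dt)
  (yt_sol : solves tn (tn + dt) (fun _ y => - (A y *m y) + g) yn yt)
  (Y0 : forall t, tn <= t <= tn + dt -> Y 0%N t = yn)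
  (Y_sol : forall m : nat,
    solves tn (tn + dt) (fun t y => - (A (Y m t) *m y) + g) yn (Y m.+1))
  (omega_ge0 : 0 <= omega)
  (A_coercive : forall (m : nat) t (x : 'cV[R]_N), tn <= t <= tn + dt ->
    omega * dotv x x <= dotv (A (Y m t) *m x) x).

Let interval_ne : tn <= tn + dt. Proof. by rewrite lerDl ltW. Qed.

Lemma picard_iterate_continuous m i :
  {within `[tn, tn + dt], continuous (fun s => Y m s i 0)}.
Proof.
case: m => [|m]; last by have [_ []] := Y_sol m.
apply: (subspace_eq_continuous (f := cst (yn i 0))).
  by move=> s; rewrite inE /= in_itv /= => /Y0; rewrite /from_subspace => ->.
exact: continuous_subspaceT (@cst_continuous _ _ _).
Qed.

Lemma picard_error_bounded m :
  exists B, forall s, tn <= s <= tn + dt -> vnorm (yt s - Y m s) <= B.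
Proof.
apply: vnorm_bounded_within interval_ne _ => i.
have -> : (fun s => (yt s - Y m s) i 0) = (fun s => yt s i 0) - (fun s => Y m s i 0).
  by apply/funext => s; rewrite !mxE.
by apply: within_continuousB; [case: yt_sol => _ [] | exact: picard_iterate_continuous].
Qed.

Lemma solution_bounded :
  exists B, forall s, tn <= s <= tn + dt -> vnorm (yt s) <= B.
Proof. by apply: vnorm_bounded_within interval_ne _; case: yt_sol => _ []. Qed.

Lemma picard_contraction m :
  maxI tn (tn + dt) (fun s => yt s - Y m.+1 s)
  <= dt * phi (- (dt * omega)) * L * maxI tn (tn + dt) yt
     * maxI tn (tn + dt) (fun s => yt s - Y m s).
Proof.
have [yt_tn [yt_cont yt_der]] := yt_sol.
have [Y_tn [Y_cont Y_der]] := Y_sol m.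
set M := maxI _ _ yt; set D := maxI _ _ (fun s => yt s - Y m s).
have M_ge0 : 0 <= M by apply: maxI_ge0 interval_ne solution_bounded.
have D_ge0 : 0 <= D by apply: maxI_ge0 interval_ne (picard_error_bounded m).
have L_ge0 := ltW L_gt0.
have K_ge0 : 0 <= L * M * D by rewrite !mulr_ge0.
pose e s := yt s - Y m.+1 s.
pose d s := - (A (Y m s) *m e s) - (A (yt s) - A (Y m s)) *m yt s.
have eE i : (fun s => e s i 0) = (fun s => yt s i 0) - (fun s => Y m.+1 s i 0).
  by apply/funext => s; rewrite !mxE.
have e_tn : e tn = 0 by rewrite /e yt_tn Y_tn subrr.
have e_cont i : {within `[tn, tn + dt], continuous (fun s => e s i 0)}.
  by rewrite eE; apply: within_continuousB.
have e_der t : tn < t < tn + dt -> forall i, is_derive t 1 (fun s => e s i 0) (d t i 0).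
  move=> tI i; rewrite eE; apply: is_derive_eq (is_deriveB (yt_der t tI i) (Y_der t tI i)) _.
  by rewrite /d /e mulmxBr mulmxBl !mxE; ring.
have e_dissip t : tn < t < tn + dt ->
    dotv (d t) (e t) <= - omega * dotv (e t) (e t) + L * M * D * vnorm (e t).
  move=> /andP[tn_lt_t t_lt]; have tI : tn <= t <= tn + dt by rewrite !ltW.
  apply: le_trans
    (dotv_dissipative_perturbation (A (yt t)) (yt t) (A_coercive m t (e t) tI)) _.
  rewrite lerD2l ler_wpM2r ?vnorm_ge0 // [L * M * D]mulrAC.
  apply: le_trans (ler_wpM2r (vnorm_ge0 _) (A_lip _ _)) _.
  rewrite ler_pM ?mulr_ge0 ?vnorm_ge0 ?ler_wpM2l //.
  - exact: maxI_ub (picard_error_bounded m) tI.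
  - exact: maxI_ub solution_bounded tI.
apply: maxI_le interval_ne _ => s sI.
apply: le_trans (vnorm_le_of_dissipative omega_ge0 K_ge0 e_tn e_cont e_der e_dissip _ sI) _.
have -> : dt * phi (- (dt * omega)) * L * M * D = L * M * D * (dt * phi (- (dt * omega))).
  by ring.
rewrite ler_wpM2l // mul_phiN_le //.
by case/andP: sI => ? ?; apply/andP; split; lra.
Qed.

End PicardIteration.

Theorem corollary4 (R : realType) (N : nat) (A : 'cV[R]_N -> 'M[R]_N) (L : R)
  (tn dt omega : R) (yn g : 'cV[R]_N) (yt : R -> 'cV[R]_N)
  (Y : nat -> R -> 'cV[R]_N) :
  (forall y, (A y)^T = A y) ->
  (forall y x, 0 <= dotv (A y *m x) x) ->
  (forall u v, opnorm (A u - A v) <= L * vnorm (u - v)) ->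
  0 < L -> 0 < dt ->
  solves tn (tn + dt) (fun _ y => - (A y *m y) + g) yn yt ->
  (forall t, tn <= t <= tn + dt -> Y 0%N t = yn) ->
  (forall m : nat, solves tn (tn + dt)
      (fun t y => - (A (Y m t) *m y) + g) yn (Y m.+1)) ->
  0 <= omega ->
  (forall (m : nat) t (x : 'cV[R]_N), tn <= t <= tn + dt ->
      omega * dotv x x <= dotv (A (Y m t) *m x) x) ->
  dt * phi (- (dt * omega)) * L * maxI tn (tn + dt) yt < 1 ->
  (forall m : nat,
     maxI tn (tn + dt) (fun s => yt s - Y m.+1 s)
     <= dt * phi (- (dt * omega)) * L * maxI tn (tn + dt) yt
        * maxI tn (tn + dt) (fun s => yt s - Y m s)) /\
  (fun m : nat => maxI tn (tn + dt) (fun s => yt s - Y m s)) @ \oo --> (0 : R).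
Proof.
move=> _ _ A_lip L_gt0 dt_gt0 yt_sol Y0 Y_sol omega_ge0 A_coercive q_lt1.
have contraction := picard_contraction A_lip L_gt0 dt_gt0 yt_sol Y0 Y_sol omega_ge0 A_coercive.
have interval_ne : tn <= tn + dt by rewrite lerDl ltW.
have error_ge0 m : 0 <= maxI tn (tn + dt) (fun s => yt s - Y m s).
  by apply: maxI_ge0 interval_ne (picard_error_bounded dt_gt0 yt_sol Y0 Y_sol m).
have q_ge0 : 0 <= dt * phi (- (dt * omega)) * L * maxI tn (tn + dt) yt.
  have M_ge0 : 0 <= maxI tn (tn + dt) yt.
    by apply: maxI_ge0 interval_ne (solution_bounded dt_gt0 yt_sol).
  have dt_ge0 := ltW dt_gt0.
  by rewrite !mulr_ge0 ?phi_ge0 // ?oppr_le0 ?mulr_ge0 // ltW.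
split=> //; apply: contraction_cvg0 error_ge0 contraction.
by rewrite q_ge0 q_lt1.
Qed.
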